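(* For any quasi-PL space $\mathcal{F}$, the underlying simplicial set $\mathcal{F}_\bullet$ is a Kan complex.
   Context: $\mathbf{PL}$ is the category of PL spaces and PL maps. A quasi-PL space is a functor $\mathcal{F}:\mathbf{PL}^{op}\to\mathbf{Sets}$ that is a sheaf for open covers and such that, for every PL space $P$ and every locally finite cover $\{Q_i\}$ of $P$ by closed PL subspaces, $\mathcal{F}(P)\to\prod_i\mathcal{F}(Q_i)\rightrightarrows\prod_{i,j}\mathcal{F}(Q_i\cap Q_j)$ is an equalizer. The underlying simplicial set $\mathcal{F}_\bullet$ is the composite of $\mathcal{F}$ with the functor $\Delta\to\mathbf{PL}$ sending $[p]$ to the geometric simplex $\Delta^p$ (the convex hull of the standard basis of $\mathbb{R}^{p+1}$) and an order-preserving map to the induced linear map. Thus $\mathcal{F}_p=\mathcal{F}(\Delta^p)$. *)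

From HB Require Import structures.
From mathcomp Require Import all_boot all_order all_algebra.
From mathcomp Require Import all_classical all_reals all_analysis.
From mathcomp Require Import Rstruct Rstruct_topology.
Set Implicit Arguments. Unset Strict Implicit. Unset Printing Implicit Defensive.
Import Order.TTheory GRing.Theory Num.Theory.
Local Open Scope classical_set_scope.
Local Open Scope ring_scope.

Definition R := Rdefinitions.R.
Definition vec (n : nat) := 'rV[R]_n.

Definition hull n k (v : 'I_k -> vec n) : set (vec n) :=
  [set x | exists t : 'I_k -> R,
     (forall i, 0 <= t i) /\ \sum_i t i = 1 /\ x = \sum_i t i *: v i].

Definition polytope n (C : set (vec n)) := exists k (v : 'I_k -> vec n), C = hull v.

Definition rel_nbhs n (P N : set (vec n)) (a : vec n) :=
  exists V : set (vec n), open V /\ V a /\ V `&` P `<=` N.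

Definition polyhedron n (P : set (vec n)) :=
  forall a, P a -> exists k (C : 'I_k -> set (vec n)),
    (forall j, polytope (C j)) /\ (forall j, C j `<=` P) /\
    rel_nbhs P [set x | exists j, C j x] a.

Definition affine_on n m (C : set (vec n)) (f : vec n -> vec m) :=
  forall x y (t : R), C x -> C y -> 0 <= t <= 1 ->
    f (t *: x + (1 - t) *: y) = t *: f x + (1 - t) *: f y.

Definition PL_map n m (P : set (vec n)) (Q : set (vec m)) (f : vec n -> vec m) :=
  (forall x, P x -> Q (f x)) /\
  forall a, P a -> exists k (C : 'I_k -> set (vec n)),
    (forall j, polytope (C j)) /\ (forall j, C j `<=` P) /\
    (forall j, affine_on (C j) f) /\ rel_nbhs P [set x | exists j, C j x] a.

Record PLspace := mkPL { dim : nat; carrier : set (vec dim); polyP : polyhedron carrier }.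
Arguments carrier : clear implicits.

Lemma incl_PL n (U P : set (vec n)) : polyhedron U -> U `<=` P -> PL_map U P id.
Proof.
move=> hU sUP; split => [x Ux|a Ua]; first exact: sUP.
have [k [C [hC [hCU hN]]]] := hU a Ua.
by exists k, C; split => //; split => //; split => // j x y t _ _ _.
Qed.

Definition is_equalizer (A : Type) (I : Type) (B : I -> Type) (C : I -> I -> Type)
  (r : forall i, A -> B i) (p1 : forall i j, B i -> C i j) (p2 : forall i j, B j -> C i j) :=
  (forall s t : A, (forall i, r i s = r i t) -> s = t) /\
  (forall b : forall i, B i, (forall i j, p1 i j (b i) = p2 i j (b j)) ->
     exists s : A, forall i, r i s = b i).

Unset Implicit Arguments.
Record quasiPL := {
  sec : PLspace -> Type;
  res : forall (P Q : PLspace) (f : vec (dim P) -> vec (dim Q)),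
          PL_map (carrier P) (carrier Q) f -> sec Q -> sec P;
  res_ext : forall P Q f g hf hg s, (forall x, carrier P x -> f x = g x) ->
          res P Q f hf s = res P Q g hg s;
  res_id : forall P h s, res P P id h s = s;
  res_comp : forall (P Q S : PLspace) f g hf hg hgf s,
          res P S (g \o f) hgf s = res P Q f hf (res Q S g hg s);
  open_sheaf : forall (P : PLspace) (I : Type) (U : I -> set (vec (dim P)))
      (hU : forall i, polyhedron (U i)) (hUU : forall i j, polyhedron (U i `&` U j))
      (sUP : forall i, U i `<=` carrier P),
      (forall i, exists V, open V /\ U i = V `&` carrier P) ->
      (forall x, carrier P x -> exists i, U i x) ->
      is_equalizer
        (fun i => res (mkPL (hU i)) P id (incl_PL (hU i) (sUP i)))
        (fun i j => res (mkPL (hUU i j)) (mkPL (hU i)) id (incl_PL (hUU i j) (@subIsetl _ _ _)))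
        (fun i j => res (mkPL (hUU i j)) (mkPL (hU j)) id (incl_PL (hUU i j) (@subIsetr _ _ _)));
  closed_sheaf : forall (P : PLspace) (I : Type) (Q : I -> set (vec (dim P)))
      (hQ : forall i, polyhedron (Q i)) (hQQ : forall i j, polyhedron (Q i `&` Q j))
      (sQP : forall i, Q i `<=` carrier P),
      (forall i, exists V, closed V /\ Q i = V `&` carrier P) ->
      (forall x, carrier P x -> exists i, Q i x) ->
      (forall x, carrier P x -> exists V, open V /\ V x /\
                   finite_set [set i | exists y, V y /\ Q i y]) ->
      is_equalizer
        (fun i => res (mkPL (hQ i)) P id (incl_PL (hQ i) (sQP i)))
        (fun i j => res (mkPL (hQQ i j)) (mkPL (hQ i)) id (incl_PL (hQQ i j) (@subIsetl _ _ _)))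
        (fun i j => res (mkPL (hQQ i j)) (mkPL (hQ j)) id (incl_PL (hQQ i j) (@subIsetr _ _ _)))
}.

Set Implicit Arguments.

Definition std_basis p : 'I_p.+1 -> vec p.+1 := fun i => delta_mx 0 i.

Definition Delta p : set (vec p.+1) := hull (@std_basis p).
Arguments Delta : clear implicits.

Lemma Delta_poly p : polyhedron (Delta p).
Proof.
move=> a Da; exists 1%N, (fun=> Delta p); split; first by move=> j; exists p.+1, (@std_basis p).
split; first by move=> j x.
exists setT; split; first exact: openT.
by split=> // x [_ Dx]; exists ord0.
Qed.

Definition DeltaPL p : PLspace := @mkPL p.+1 (Delta p) (@Delta_poly p).

Definition ind_mx p q (th : 'I_p.+1 -> 'I_q.+1) : 'M[R]_(p.+1, q.+1) :=
  \matrix_(i, j) ((th i == j)%:R).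
Definition ind p q (th : 'I_p.+1 -> 'I_q.+1) : vec p.+1 -> vec q.+1 :=
  fun x => x *m ind_mx th.

Lemma ind_PL p q (th : 'I_p.+1 -> 'I_q.+1) : PL_map (Delta p) (Delta q) (ind th).
Proof.
have ind_lin : forall (a b : R) x y, ind th (a *: x + b *: y) = a *: ind th x + b *: ind th y.
  by move=> a b x y; rewrite /ind mulmxDl !scalemxAl.
split=> [x [t [t0 [t1 ->]]]|a Da].
  exists (fun j => \sum_(i | th i == j) t i); split; first by move=> j; apply: sumr_ge0.
  split.
    by rewrite -t1 (partition_big th xpredT) //=.
  rewrite /ind mulmx_suml (partition_big th xpredT) //=.
  apply: eq_bigr => j _; rewrite scaler_suml; apply: eq_bigr => i /eqP <-.
  rewrite -scalemxAl /std_basis -rowE; congr (_ *: _).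
  by apply/matrixP => r l; rewrite !mxE (ord1 r) eqxx /= eq_sym.
exists 1%N, (fun=> Delta p); split; first by move=> j; exists p.+1, (@std_basis p).
split; first by move=> j x.
split; first by move=> j x y t _ _ _; exact: ind_lin.
exists setT; split; first exact: openT.
by split=> // x [_ Dx]; exists ord0.
Qed.

Record sset := { ss_obj : nat -> Type;
                 ss_op : forall p q, ('I_p.+1 -> 'I_q.+1) -> ss_obj q -> ss_obj p }.

Definition underlying (F : quasiPL) : sset :=
  {| ss_obj := fun p => sec F (DeltaPL p);
     ss_op := fun p q th => res F (DeltaPL p) (DeltaPL q) (ind th) (ind_PL th) |}.

Definition face (X : sset) n (i : 'I_n.+2) : ss_obj X n.+1 -> ss_obj X n :=
  @ss_op X n n.+1 (lift i).

Definition horn_compat (X : sset) (n : nat) :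
    ('I_n.+2 -> ss_obj X n) -> 'I_n.+2 -> Prop :=
  match n as n0 return ('I_n0.+2 -> ss_obj X n0) -> 'I_n0.+2 -> Prop with
  | 0 => fun _ _ => True
  | m.+1 => fun y k => forall i j : 'I_m.+3, (i < j)%N -> i != k -> j != k ->
              face (inord i) (y j) = face (inord j.-1) (y i)
  end.

Definition is_Kan (X : sset) : Prop :=
  forall (n : nat) (k : 'I_n.+2) (y : 'I_n.+2 -> ss_obj X n),
    horn_compat y k -> exists x : ss_obj X n.+1, forall i, i != k -> face i x = y i.

From HB Require Import structures.
From mathcomp Require Import all_boot all_order all_algebra.
From mathcomp Require Import all_classical all_reals all_analysis.
From mathcomp Require Import Rstruct Rstruct_topology.
From mathcomp Require Import ring zify.
Set Implicit Arguments. Unset Strict Implicit. Unset Printing Implicit Defensive.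
Import Order.TTheory GRing.Theory Num.Theory.
Local Open Scope classical_set_scope.
Local Open Scope ring_scope.

(* The horn Λ^{n+1}_k ⊆ Δ^{n+1} is the union of the facets {x_a = 0}, a ≠ k,
   a finite cover by closed PL subspaces, so by the closed sheaf condition a
   compatible family y glues to a section s over Λ.  The map
   x ↦ x + (min_{l ≠ k} x_l) ((n+1) e_k - Σ_{l ≠ k} e_l) is a PL retraction r
   of Δ^{n+1} onto Λ (affine where a fixed coordinate realises the minimum),
   and r^* s is a filler: its a-th face is the pullback of s along
   r ∘ δ^a = δ^a, i.e. y_a. *)

Lemma sum_mul_delta n (t : 'I_n -> R) l : \sum_i t i * (i == l)%:R = t l.
Proof.
rewrite (bigD1 l) //= eqxx mulr1 big1 ?addr0 // => i /negbTE ->; by rewrite mulr0.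
Qed.

Lemma sum_mul_delta2_const N (a b c : R) (j k : 'I_N) :
  \sum_(l < N) (a * (l == j)%:R + b * (l == k)%:R + c) = a + b + c *+ N.
Proof.
rewrite !big_split /= sumr_const card_ord.
by rewrite (sum_mul_delta (fun=> a)) (sum_mul_delta (fun=> b)).
Qed.

Lemma sumZ_coord p k (t : 'I_k -> R) (v : 'I_k -> vec p) m :
  (\sum_i t i *: v i) 0 m = \sum_i t i * v i 0 m.
Proof. by rewrite summxE; apply: eq_bigr => i _; rewrite mxE. Qed.

Lemma std_basis_coord p (l m : 'I_p.+1) : std_basis l 0 m = (l == m)%:R.
Proof. by rewrite /std_basis mxE eqxx /= eq_sym. Qed.

Lemma DeltaE p (x : vec p.+1) :
  Delta p x <-> (forall l, 0 <= x 0 l) /\ \sum_l x 0 l = 1.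
Proof.
have sum_basis (t : 'I_p.+1 -> R) l : (\sum_i t i *: std_basis i) 0 l = t l.
  by rewrite sumZ_coord; under eq_bigr do rewrite std_basis_coord; rewrite sum_mul_delta.
split.
  case=> t [t0 [t1 ->]].
  by split => [l|]; rewrite ?sum_basis //; under eq_bigr do rewrite sum_basis.
case=> x0 x1; exists (fun l => x 0 l); split => //; split => //.
by apply/rowP => m; rewrite sum_basis.
Qed.

Lemma std_basis_Delta p (l : 'I_p.+1) : Delta p (std_basis l).
Proof.
apply/DeltaE; split => [m|]; first by rewrite std_basis_coord ler0n.
rewrite -(sum_mul_delta (fun=> 1) l); apply: eq_bigr => i _.
by rewrite std_basis_coord mul1r eq_sym.
Qed.

Lemma hull_sub_Delta p k (v : 'I_k -> vec p.+1) :
  (forall l, Delta p (v l)) -> hull v `<=` Delta p.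
Proof.
move=> hv x [t [t0 [t1 ->]]]; apply/DeltaE; split => [m|].
  rewrite sumZ_coord; apply: sumr_ge0 => i _; apply: mulr_ge0 => //.
  by have [h _] := (DeltaE _).1 (hv i); exact: h.
under eq_bigr do rewrite sumZ_coord.
rewrite exchange_big /= -t1; apply: eq_bigr => i _.
by rewrite -mulr_sumr; have [_ ->] := (DeltaE _).1 (hv i); rewrite mulr1.
Qed.

Lemma hull_convex n k (v : 'I_k -> vec n) x y (t : R) :
  hull v x -> hull v y -> 0 <= t <= 1 -> hull v (t *: x + (1 - t) *: y).
Proof.
move=> [a [a0 [a1 ->]]] [b [b0 [b1 ->]]] /andP[t0 t1].
exists (fun i => t * a i + (1 - t) * b i); split.
  by move=> i; apply: addr_ge0; apply: mulr_ge0 => //; rewrite subr_ge0.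
split; first by rewrite big_split /= -!mulr_sumr a1 b1 !mulr1 addrC subrK.
rewrite !scaler_sumr -big_split /=; apply: eq_bigr => i _.
by rewrite [RHS]scalerDl !scalerA.
Qed.

Lemma polytope_polyhedron n (C : set (vec n)) : polytope C -> polyhedron C.
Proof.
move=> hC a Ca; exists 1%N, (fun=> C); split; first by move=> j.
split; first by move=> j.
exists setT; split; first exact: openT.
by split => // x [_ Cx]; exists ord0.
Qed.

Lemma PL_map_ext n m (P : set (vec n)) (Q : set (vec m)) f g :
  (forall x, P x -> f x = g x) -> PL_map P Q f -> PL_map P Q g.
Proof.
move=> fg [fQ hf]; split => [x Px|a Pa]; first by rewrite -fg //; exact: fQ.
have [k [C [hC [CP [Ca hN]]]]] := hf a Pa.
exists k, C; split => //; split => //; split => // j x y t Cx Cy ht.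
have [l [v Cv]] := hC j.
have cvx : C j (t *: x + (1 - t) *: y).
  by rewrite Cv; apply: hull_convex => //; rewrite -Cv.
rewrite -(fg x (CP j x Cx)) -(fg y (CP j y Cy)) -(fg _ (CP j _ cvx)).
exact: (Ca j x y t Cx Cy ht).
Qed.

Lemma linear_PL_map n m (P : set (vec n)) (Q : set (vec m)) (M : 'M[R]_(n, m)) :
  polyhedron P -> (forall x, P x -> Q (x *m M)) -> PL_map P Q (fun x => x *m M).
Proof.
move=> hP PQ; split => // a Pa.
have [k [C [hC [CP hN]]]] := hP a Pa.
exists k, C; split => //; split => //; split => // j x y t _ _ _.
by rewrite mulmxDl -!scalemxAl.
Qed.

Lemma ind_PL_map p q (th : 'I_p.+1 -> 'I_q.+1) (S : set (vec q.+1)) :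
  (forall z, Delta p z -> S (ind th z)) -> PL_map (Delta p) S (ind th).
Proof. by move=> hS; apply: linear_PL_map => //; exact: Delta_poly. Qed.

Section Restriction.
Variable F : quasiPL.

Lemma res_factor (P Q S : PLspace) f g h hf hg hh s :
  (forall x, carrier P x -> f x = h (g x)) ->
  res F P S f hf s = res F P Q g hg (res F Q S h hh s).
Proof.
move=> fE; rewrite (res_ext F _ _ _ (h \o g) hf (PL_map_ext fE hf) s fE).
exact: res_comp.
Qed.

Lemma res_id_on (P : PLspace) f hf s :
  (forall x, carrier P x -> f x = x) -> res F P P f hf s = s.
Proof.
move=> fE; rewrite (res_ext F _ _ _ id hf (PL_map_ext fE hf) s fE).
exact: res_id.
Qed.

End Restriction.

Definition Delta_vanish p (Z : pred 'I_p.+1) : set (vec p.+1) :=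
  [set x | Delta p x /\ forall l, Z l -> x 0 l = 0].

Lemma Delta_vanish_hull p (Z : pred 'I_p.+1) s : ~~ Z s ->
  Delta_vanish Z = hull (fun l => if Z l then std_basis s else std_basis l).
Proof.
move=> Zs; apply/seteqP; split.
  move=> x [/DeltaE [x0 x1] xZ].
  exists (fun l => if Z l then 0 else x 0 l); split; first by move=> l; case: ifP.
  split; first by rewrite -x1; apply: eq_bigr => l _; case: ifP => // /xZ ->.
  apply/rowP => m; rewrite sumZ_coord.
  rewrite -(sum_mul_delta (fun l => x 0 l) m); apply: eq_bigr => l _.
  case: ifP => [/xZ ->|_]; first by rewrite !mul0r.
  by rewrite std_basis_coord.
move=> x hx; split.
  by apply: (hull_sub_Delta _ hx) => l; case: ifP => _; exact: std_basis_Delta.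
move=> m Zm; case: hx => t [_ [_ ->]]; rewrite sumZ_coord big1 // => l _.
case: ifP => Zl; rewrite std_basis_coord.
  by rewrite (_ : s == m = false) ?mulr0 //; apply/negbTE; apply: contraNneq Zs => ->.
by rewrite (_ : l == m = false) ?mulr0 //; apply/negbTE; apply: contraFneq Zl => ->.
Qed.

Lemma Delta_vanish_polyhedron p (Z : pred 'I_p.+1) s :
  ~~ Z s -> polyhedron (Delta_vanish Z).
Proof. by move=> /Delta_vanish_hull ->; apply: polytope_polyhedron; do 2 eexists. Qed.

Definition facet p (a : 'I_p.+2) : set (vec p.+2) := Delta_vanish (pred1 a).

Lemma facet_polytope p (a : 'I_p.+2) : polytope (facet a).
Proof.
rewrite /facet (@Delta_vanish_hull _ _ (lift a ord0)); first by do 2 eexists.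
by rewrite /= eq_sym neq_lift.
Qed.

Lemma facet_polyhedron p (a : 'I_p.+2) : polyhedron (facet a).
Proof. exact/polytope_polyhedron/facet_polytope. Qed.

Lemma facet_coord p (a : 'I_p.+2) (x : vec p.+2) : facet a x -> x 0 a = 0.
Proof. by case=> _; apply; rewrite /= eqxx. Qed.

Lemma facetI p (a b : 'I_p.+2) : facet a `&` facet b = Delta_vanish (pred2 a b).
Proof.
apply/seteqP; split.
  by move=> x [[Dx ha] [_ hb]]; split => // l /orP [] /eqP ->;
    [apply: ha | apply: hb]; rewrite /= eqxx.
by move=> x [Dx h]; split; split => // l /eqP ->; apply: h; rewrite /= eqxx ?orbT.
Qed.

Definition drop_coord p (a : 'I_p.+2) (x : vec p.+2) : vec p.+1 :=
  x *m (ind_mx (lift a))^T.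

Lemma drop_coordE p (a : 'I_p.+2) x m : drop_coord a x 0 m = x 0 (lift a m).
Proof.
rewrite /drop_coord mxE -(sum_mul_delta (fun i => x 0 i) (lift a m)).
by apply: eq_bigr => i _; rewrite !mxE eq_sym.
Qed.

Lemma drop_coord_comm p (a b : 'I_p.+3) (x : vec p.+3) : (a < b)%N ->
  drop_coord (inord a) (drop_coord b x) = drop_coord (inord b.-1) (drop_coord a x).
Proof.
move=> ab; apply/rowP => m; rewrite !drop_coordE; congr (x 0 _).
have hb := ltn_ord b; apply: val_inj => /=.
rewrite (@inordK _ a); last by lia.
rewrite (@inordK _ b.-1); last by lia.
by rewrite /bump; case: (leqP b.-1 m) => h1; case: (leqP a m) => h2 /=;
  case: leqP; case: leqP; lia.
Qed.

Lemma lift_inord_pred p (a b : 'I_p.+2) : (a < b)%N -> lift a (inord b.-1 : 'I_p.+1) = b.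
Proof.
move=> ab; have hb := ltn_ord b; apply: val_inj => /=.
by rewrite inordK /bump; lia.
Qed.

Lemma lift_inord_lt p (a b : 'I_p.+2) : (a < b)%N -> lift b (inord a : 'I_p.+1) = a.
Proof.
move=> ab; have hb := ltn_ord b; apply: val_inj => /=.
by rewrite inordK /bump; lia.
Qed.

Lemma ind_lift_coord p (a : 'I_p.+2) z j : ind (lift a) z 0 (lift a j) = z 0 j.
Proof.
rewrite /ind mxE -(sum_mul_delta (fun i => z 0 i) j); apply: eq_bigr => i _.
by rewrite !mxE (inj_eq (@lift_inj _ a)).
Qed.

Lemma ind_lift_coord_at p (a : 'I_p.+2) z : ind (lift a) z 0 a = 0.
Proof.
rewrite /ind mxE big1 // => i _.
by rewrite !mxE eq_sym (negbTE (neq_lift a i)) mulr0.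
Qed.

Lemma ind_liftK p (a : 'I_p.+2) : cancel (ind (lift a)) (drop_coord a).
Proof. by move=> z; apply/rowP => m; rewrite drop_coordE ind_lift_coord. Qed.

Lemma drop_coordK p (a : 'I_p.+2) (x : vec p.+2) :
  x 0 a = 0 -> ind (lift a) (drop_coord a x) = x.
Proof.
move=> xa; apply/rowP => l; case: (unliftP a l) => [j ->|->].
  by rewrite ind_lift_coord drop_coordE.
by rewrite ind_lift_coord_at xa.
Qed.

Lemma drop_coord_Delta p (a : 'I_p.+2) (x : vec p.+2) :
  facet a x -> Delta p (drop_coord a x).
Proof.
move=> hx; have xa := facet_coord hx; case: hx => [/DeltaE [x0 x1] _].
apply/DeltaE; split => [m|]; first by rewrite drop_coordE.
move: x1; rewrite (bigD1_ord a) //= xa add0r => <-.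
by apply: eq_bigr => m _; rewrite drop_coordE.
Qed.

Lemma drop_coord_PL_map p (a : 'I_p.+2) (S : set (vec p.+2)) :
  polyhedron S -> S `<=` facet a -> PL_map S (Delta p) (drop_coord a).
Proof. by move=> hS Sa; apply: linear_PL_map => // x /Sa /drop_coord_Delta. Qed.

Lemma ind_lift_facet p (a : 'I_p.+2) z : Delta p z -> facet a (ind (lift a) z).
Proof.
move=> hz; split; first exact: (ind_PL (lift a)).1.
by move=> l /eqP ->; rewrite ind_lift_coord_at.
Qed.

(* On facet a ∩ facet b both pullbacks factor through the codimension-two face,
   where they become the two sides of the compatibility d_a y_b = d_{b-1} y_a. *)
Lemma horn_compat_res_lt (F : quasiPL) n (k : 'I_n.+2)
  (y : 'I_n.+2 -> sec F (DeltaPL n)) (hy : @horn_compat (underlying F) n y k)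
  (S : set (vec n.+2)) (hS : polyhedron S) (a b : 'I_n.+2) :
  (a < b)%N -> a != k -> b != k -> S `<=` facet a `&` facet b ->
  forall h1 h2, res F (mkPL hS) (DeltaPL n) (drop_coord a) h1 (y a) =
                res F (mkPL hS) (DeltaPL n) (drop_coord b) h2 (y b).
Proof.
case: n k y hy S hS a b => [|m] k y hy S hS a b ab ak bk Sab h1 h2.
  by have := ltn_ord b; have := ltn_ord k; move: ab ak bk; rewrite -!val_eqE /=; lia.
pose a' : 'I_m.+2 := inord a; pose b' : 'I_m.+2 := inord b.-1.
pose pi x := drop_coord b' (drop_coord a x).
have Sb' x : S x -> facet b' (drop_coord a x).
  move=> /Sab [Sa Sb]; split; first exact: drop_coord_Delta.
  by move=> l /eqP ->; rewrite drop_coordE lift_inord_pred // (facet_coord Sb).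
have hpi : PL_map (carrier (mkPL hS)) (carrier (DeltaPL m)) pi.
  pose M := (ind_mx (lift a))^T *m (ind_mx (lift b'))^T.
  apply: (@PL_map_ext _ _ _ _ (fun x => x *m M)).
    by move=> x _; rewrite /pi /drop_coord mulmxA.
  by apply: linear_PL_map => // x Sx; rewrite mulmxA; exact/drop_coord_Delta/Sb'.
have pi_a x : S x -> drop_coord a x = ind (lift b') (pi x).
  by move=> Sx; rewrite drop_coordK //; exact: facet_coord (Sb' x Sx).
have pi_b x : S x -> drop_coord b x = ind (lift a') (pi x).
  move=> Sx; rewrite /pi -drop_coord_comm // drop_coordK //.
  by rewrite drop_coordE lift_inord_lt //; have [/facet_coord] := Sab x Sx.
rewrite (res_factor h1 hpi (ind_PL _) _ pi_a) (res_factor h2 hpi (ind_PL _) _ pi_b).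
by congr (res F _ _ _ _ _); symmetry; exact: hy.
Qed.

Lemma horn_compat_res (F : quasiPL) n (k : 'I_n.+2)
  (y : 'I_n.+2 -> sec F (DeltaPL n)) (hy : @horn_compat (underlying F) n y k)
  (S : set (vec n.+2)) (hS : polyhedron S) (a b : 'I_n.+2) :
  a != k -> b != k -> S `<=` facet a `&` facet b ->
  forall h1 h2, res F (mkPL hS) (DeltaPL n) (drop_coord a) h1 (y a) =
                res F (mkPL hS) (DeltaPL n) (drop_coord b) h2 (y b).
Proof.
move=> ak bk Sab h1 h2; case: (ltngtP a b) => [ab|ba|/val_inj ab].
- exact: (horn_compat_res_lt hy ab ak bk Sab).
- by symmetry; apply: (horn_compat_res_lt hy ba bk ak) => x /Sab [].
- by subst b; apply: res_ext.
Qed.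

Section HornRetraction.
Variables (n : nat) (k : 'I_n.+2).
Implicit Types x : vec n.+2.

Definition horn : set (vec n.+2) := [set x | exists i : 'I_n.+1, facet (lift k i) x].

Lemma horn_polyhedron : polyhedron horn.
Proof.
move=> a _; exists n.+1, (fun i => facet (lift k i)).
split; first by move=> i; exact: facet_polytope.
split; first by move=> i x hx; exists i.
exists setT; split; first exact: openT.
by split => // x [_ [i hx]]; exists i.
Qed.

Lemma horn_Delta x : horn x -> Delta n.+1 x.
Proof. by case=> i [? _]. Qed.

Definition min_index x : 'I_n.+2 :=
  Order.arg_min (lift k ord0) (fun l => l != k) (fun l => x 0 l).
Definition min_coord x := x 0 (min_index x).
Definition retr_dir : vec n.+2 := \row_l (if l == k then n.+1%:R else -1).
Definition horn_retr x : vec n.+2 := x + min_coord x *: retr_dir.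

Lemma min_indexP x : min_index x != k /\ forall l, l != k -> min_coord x <= x 0 l.
Proof.
rewrite /min_coord /min_index; case: arg_minP; first by rewrite eq_sym neq_lift.
by move=> i Pi Hi; split.
Qed.

Lemma min_coord_ge0 x : Delta n.+1 x -> 0 <= min_coord x.
Proof. by move=> /DeltaE [x0 _]; exact: x0. Qed.

Lemma min_coordE x (j : 'I_n.+2) :
  j != k -> (forall l, l != k -> x 0 j <= x 0 l) -> min_coord x = x 0 j.
Proof.
move=> jk hj; have [jmk hm] := min_indexP x.
by apply/le_anti; rewrite hm //= hj.
Qed.

Lemma horn_retr_coord x l :
  horn_retr x 0 l = x 0 l + min_coord x * (if l == k then n.+1%:R else -1).
Proof. by rewrite /horn_retr !mxE. Qed.

Lemma sum_retr_dir : \sum_l (if l == k then n.+1%:R else -1 : R) = 0.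
Proof.
rewrite (bigD1_ord k) //= eqxx.
rewrite (eq_bigr (fun=> -1)); last by move=> i _; rewrite eq_sym (negbTE (neq_lift k i)).
by rewrite sumr_const card_ord mulNrn subrr.
Qed.

Lemma horn_retr_horn x : Delta n.+1 x -> horn (horn_retr x).
Proof.
move=> hx; have [jmk hm] := min_indexP x; have m0 := min_coord_ge0 hx.
have /DeltaE [x0 x1] := hx.
have Dr : Delta n.+1 (horn_retr x).
  apply/DeltaE; split => [l|].
    rewrite horn_retr_coord; case: eqP => [_|/eqP lk].
      by apply: addr_ge0 => //; apply: mulr_ge0.
    by rewrite mulrN1 subr_ge0; exact: hm.
  under eq_bigr do rewrite horn_retr_coord.
  by rewrite big_split /= x1 -mulr_sumr sum_retr_dir mulr0 addr0.
case: (unliftP k (min_index x)) => [i ei|ek]; last by rewrite ek eqxx in jmk.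
exists i; split => // l /eqP ->.
by rewrite horn_retr_coord -ei (negbTE jmk) mulrN1 /min_coord subrr.
Qed.

Lemma horn_retr_id x : horn x -> horn_retr x = x.
Proof.
move=> hx; have m0 := min_coord_ge0 (horn_Delta hx).
case: hx => i hx; have [_ hm] := min_indexP x.
have : min_coord x <= x 0 (lift k i) by apply: hm; rewrite eq_sym neq_lift.
rewrite (facet_coord hx) => m1.
by rewrite /horn_retr (_ : min_coord x = 0) ?scale0r ?addr0 //; apply/le_anti; rewrite m1 m0.
Qed.

Definition retr_piece (i : 'I_n.+1) : set (vec n.+2) :=
  [set x | Delta n.+1 x /\ forall l, l != k -> x 0 (lift k i) <= x 0 l].

Definition opp_barycentre : vec n.+2 := \row_l (if l == k then 0 else n.+1%:R^-1).

Lemma opp_barycentre_Delta : Delta n.+1 opp_barycentre.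
Proof.
apply/DeltaE; split => [l|]; first by rewrite mxE; case: ifP => // _; rewrite invr_ge0 ler0n.
under eq_bigr do rewrite mxE.
rewrite (bigD1_ord k) //= eqxx add0r.
rewrite (eq_bigr (fun=> n.+1%:R^-1)); last first.
  by move=> i _; rewrite eq_sym (negbTE (neq_lift k i)).
by rewrite sumr_const card_ord -[in RHS](@mulVf _ n.+1%:R) ?pnatr_eq0 // mulr_natr.
Qed.

Lemma sum_opp_barycentre_coord (j : 'I_n.+2) (t : 'I_n.+2 -> R) m :
  (\sum_l t l *: (if l == j then opp_barycentre else std_basis l)) 0 m =
  t j * opp_barycentre 0 m + (if m == j then 0 else t m).
Proof.
rewrite sumZ_coord (bigD1 j) //= eqxx; congr (_ + _).
case: eqP => [->|/eqP mj].
  by apply: big1 => l /negbTE lj; rewrite lj std_basis_coord lj mulr0.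
rewrite (bigD1 m) //= (negbTE mj) std_basis_coord eqxx mulr1 big1 ?addr0 //.
by move=> l /andP [/negbTE lj /negbTE lm]; rewrite lj std_basis_coord lm mulr0.
Qed.

Lemma retr_piece_hull (i : 'I_n.+1) : retr_piece i =
  hull (fun l => if l == lift k i then opp_barycentre else std_basis l).
Proof.
set j := lift k i.
have jk : j != k by rewrite eq_sym neq_lift.
have n0 : n.+1%:R != 0 :> R by rewrite pnatr_eq0.
apply/seteqP; split.
  move=> x [/DeltaE [x0 x1] hj].
  (* Barycentric coordinates of x (casewise in tE): the barycentre carries
     weight (n+1) x_j, i.e. x_j in each coordinate l <> k. *)
  pose t l := x 0 l + ((x 0 j *+ n.+1) * (l == j)%:R + x 0 j * (l == k)%:R + (- x 0 j)).
  have tE l : t l = if l == j then x 0 j *+ n.+1 else if l == k then x 0 k else x 0 l - x 0 j.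
    rewrite /t; case: (l =P j) => [->|/eqP lj]; first by rewrite (negbTE jk) mulr1 mulr0; ring.
    case: (l =P k) => [->|/eqP lk]; first by rewrite mulr0 mulr1; ring.
    by rewrite !mulr0; ring.
  exists t; split.
    move=> l; rewrite tE; case: ifP => _; first by rewrite mulrn_wge0.
    case: ifP => [_|/negbT lk]; first exact: x0.
    by rewrite subr_ge0 hj.
  split; first by rewrite /t big_split /= x1 sum_mul_delta2_const mulNrn mulrSr; ring.
  apply/rowP => m; rewrite sum_opp_barycentre_coord mxE !tE eqxx.
  case: (m =P j) => [->|/eqP mj].
    by rewrite (negbTE jk) addr0 -[x 0 j *+ _]mulr_natr mulfK.
  case: (m =P k) => [->|/eqP mk]; first by rewrite mulr0 add0r.
  by rewrite -[x 0 j *+ _]mulr_natr mulfK //; ring.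
move=> x hx; split.
  apply: (hull_sub_Delta _ hx) => l.
  by case: ifP => _; [exact: opp_barycentre_Delta | exact: std_basis_Delta].
case: hx => t [t0 [_ ->]] l lk.
rewrite !sum_opp_barycentre_coord eqxx addr0 !mxE (negbTE jk) (negbTE lk).
by case: ifP => _; rewrite ?addr0 // lerDl.
Qed.

Lemma horn_retr_affine (i : 'I_n.+1) : affine_on (retr_piece i) horn_retr.
Proof.
set j := lift k i.
have jk : j != k by rewrite eq_sym neq_lift.
move=> x y t [_ hx] [_ hy] /andP [t0 t1].
have t1' : 0 <= 1 - t by rewrite subr_ge0.
rewrite /horn_retr (min_coordE jk hx) (min_coordE jk hy) (@min_coordE _ j jk).
  by apply/rowP => l; rewrite !mxE; ring.
move=> l lk; rewrite !mxE.
by apply: lerD; apply: ler_wpM2l => //; [exact: hx | exact: hy].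
Qed.

Lemma horn_retr_PL_map : PL_map (Delta n.+1) horn horn_retr.
Proof.
split; first exact: horn_retr_horn.
move=> a _; exists n.+1, retr_piece; split.
  by move=> i; rewrite retr_piece_hull; do 2 eexists.
split; first by move=> i x [].
split; first exact: horn_retr_affine.
exists setT; split; first exact: openT.
split => // x [_ Dx]; have [jmk hm] := min_indexP x.
case: (unliftP k (min_index x)) => [i ei|ek]; last by rewrite ek eqxx in jmk.
by exists i; split => // l lk; rewrite -ei; exact: hm.
Qed.

End HornRetraction.

Definition hornPL n (k : 'I_n.+2) : PLspace := mkPL (@horn_polyhedron n k).

Definition facetPL p (a : 'I_p.+2) : PLspace := mkPL (@facet_polyhedron p a).

Lemma facet_sub_horn n (k : 'I_n.+2) i : facet (lift k i) `<=` horn k.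
Proof. by move=> x hx; exists i. Qed.

Lemma facetI_polyhedron n (k : 'I_n.+2) i j :
  polyhedron (facet (lift k i) `&` facet (lift k j)).
Proof.
rewrite facetI; apply: (@Delta_vanish_polyhedron _ _ k).
by rewrite /= !(negbTE (neq_lift _ _)).
Qed.

Lemma facet_closed_in_horn n (k : 'I_n.+2) i :
  exists V, closed V /\ facet (lift k i) = V `&` horn k.
Proof.
exists [set x : vec n.+2 | x 0 (lift k i) = 0]; split.
  apply: (@preimage_closed _ _ (fun x : vec n.+2 => x 0 (lift k i)) [set 0]).
    by move=> x _; exact: coord_continuous.
  exact: closed_eq.
apply/seteqP; split; first by move=> x hx; split; [exact: facet_coord hx | exists i].
by move=> x [xa [i' [Dx _]]]; split => // l /eqP ->.
Qed.

Lemma drop_coord_facet_PL_map p (a : 'I_p.+2) : PL_map (facet a) (Delta p) (drop_coord a).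
Proof. exact: drop_coord_PL_map (@facet_polyhedron p a) (@subset_refl _ _). Qed.

Lemma horn_glue (F : quasiPL) n (k : 'I_n.+2) (y : 'I_n.+2 -> sec F (DeltaPL n)) :
  @horn_compat (underlying F) n y k ->
  exists s : sec F (hornPL k), forall i,
    res F (facetPL (lift k i)) (hornPL k) id
      (incl_PL (@facet_polyhedron _ _) (@facet_sub_horn n k i)) s =
    res F (facetPL (lift k i)) (DeltaPL n) (drop_coord (lift k i))
      (drop_coord_facet_PL_map _) (y (lift k i)).
Proof.
move=> hy.
have cover x : horn k x -> exists i, facet (lift k i) x by [].
have loc_fin x : horn k x -> exists V, open V /\ V x /\
    finite_set [set i | exists z, V z /\ facet (lift k i) z].
  by move=> _; exists setT; split; [exact: openT | split => //; exact: finite_finset].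
have [_ glue] := closed_sheaf F (hornPL k) 'I_n.+1 (fun i => facet (lift k i))
  (fun i => @facet_polyhedron _ _) (@facetI_polyhedron n k) (@facet_sub_horn n k)
  (facet_closed_in_horn k) cover loc_fin.
apply: glue => i j.
pose Sij := mkPL (@facetI_polyhedron n k i j).
have pullback_facet a (sub : carrier Sij `<=` facet a) hg :
    res F Sij (facetPL a) id hg
      (res F (facetPL a) (DeltaPL n) (drop_coord a) (drop_coord_facet_PL_map a) (y a)) =
    res F Sij (DeltaPL n) (drop_coord a)
      (drop_coord_PL_map (@facetI_polyhedron n k i j) sub) (y a).
  by symmetry; apply: res_factor.
apply: etrans (pullback_facet _ (@subIsetl _ _ _) _) _.
apply: etrans _ (esym (pullback_facet _ (@subIsetr _ _ _) _)).
by apply: (horn_compat_res hy); rewrite // eq_sym neq_lift.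
Qed.

Lemma ind_lift_horn n (k : 'I_n.+2) i z : Delta n z -> horn k (ind (lift (lift k i)) z).
Proof. by move=> hz; exists i; exact: ind_lift_facet. Qed.

Theorem proposition2p10 (F : quasiPL) : is_Kan (underlying F).
Proof.
move=> n k y hy; have [s hs] := horn_glue hy.
exists (res F (DeltaPL n.+1) (hornPL k) (horn_retr k) (horn_retr_PL_map k) s) => a ak.
have [i ->] : exists i, a = lift k i.
  by case: (unliftP k a) ak => [i ->|->]; [exists i | rewrite eqxx].
have ind_horn_PL :
    PL_map (carrier (DeltaPL n)) (carrier (hornPL k)) (ind (lift (lift k i))).
  exact: ind_PL_map (@ind_lift_horn n k i).
have ind_facet_PL :
    PL_map (carrier (DeltaPL n)) (carrier (facetPL (lift k i))) (ind (lift (lift k i))).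
  exact: ind_PL_map (@ind_lift_facet _ _).
have id_PL : PL_map (carrier (DeltaPL n)) (carrier (DeltaPL n)) id :=
  incl_PL (@Delta_poly n) (@subset_refl _ _).
rewrite /face /= -(res_factor (Q := DeltaPL n.+1) ind_horn_PL (ind_PL _)
  (horn_retr_PL_map k) _ (fun z hz => esym (horn_retr_id (@ind_lift_horn n k i z hz)))).
rewrite (res_factor ind_horn_PL ind_facet_PL
  (incl_PL (@facet_polyhedron _ _) (@facet_sub_horn n k i)) _ (fun _ _ => erefl)) hs.
rewrite -(res_factor id_PL _ _ _ (fun z _ => esym (ind_liftK _ z))).
exact: res_id.
Qed.
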